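(* Let $0<q<1$. Define the $q$-Hermite polynomials $H_{n,q}(x)$ by \[ H_q(t)\,e_q(tx)=\sum_{n=0}^\infty H_{n,q}(x)\frac{t^n}{[n]_q!},\qquad H_q(t)=\sum_{n=0}^\infty(-1)^nq^{n(n-1)}\frac{t^{2n}}{[2n]_q!!}. \] Then for every integer $n\ge2$, \[ H_{n,q}(qx)=xq^nH_{n-1,q}(x)-[n-1]_q\,q^{n-2}H_{n-2,q}(x). \]
   Context: $[n]_q=\frac{1-q^n}{1-q}$, $[0]_q!=1$, $[n]_q!=[n]_q\cdots[1]_q$, $[0]_q!!=1$, $[2n]_q!!=[2n]_q[2n-2]_q\cdots[2]_q$, and $e_q(t)=\sum_{n\ge0}\frac{t^n}{[n]_q!}$. *)

From mathcomp Require Import all_boot all_order all_algebra.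
Set Implicit Arguments. Unset Strict Implicit. Unset Printing Implicit Defensive.
Import Order.TTheory GRing.Theory Num.Theory.
Local Open Scope ring_scope.

Section QDefs.
Variable R : realFieldType.

Definition qint (q : R) (n : nat) : R := (1 - q ^+ n) / (1 - q).

Definition qfact (q : R) (n : nat) : R := \prod_(1 <= i < n.+1) qint q i.

(* [2n]_q!! = [2n]_q [2n-2]_q ... [2]_q, [0]_q!! = 1 ; argument is n *)
Definition qdfact2 (q : R) (n : nat) : R := \prod_(1 <= i < n.+1) qint q (2 * i).

(* coefficient of t^m in H_q(t) = sum_n (-1)^n q^{n(n-1)} t^{2n} / [2n]_q!! *)
Definition Hq_coef (q : R) (m : nat) : R :=
  if odd m then 0
  else (-1) ^+ (m./2) * q ^+ (m./2 * (m./2).-1) / qdfact2 q (m./2).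

(* coefficient of t^m in e_q(t x) = sum_m (t x)^m / [m]_q! *)
Definition eq_coef (q x : R) (m : nat) : R := x ^+ m / qfact q m.

(* H_{n,q}(x) : [n]_q! times the coefficient of t^n in the (Cauchy) product
   H_q(t) e_q(t x) *)
Definition qHermite (q : R) (n : nat) (x : R) : R :=
  qfact q n * \sum_(i < n.+1) Hq_coef q i * eq_coef q x (n - i).

End QDefs.

(** Write h_n(x) := H_(n,q)(x)/[n]_q! = sum_(i+k=n) c_i x^k/[k]_q!, with c_i the
    coefficients of H_q.  The identity [i+k]_q q^k = q^k [i]_q + q^(i+k) [k]_q splits
    each term c_i (qx)^k/[k]_q! of [n]_q h_n(qx) in two: [k]_q x^k/[k]_q! = x x^(k-1)/[k-1]_q!
    yields x q^n h_(n-1)(x), and [i+2]_q c_(i+2) = -q^i c_i yields -q^(n-2) h_(n-2)(x). *)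
From mathcomp Require Import all_boot all_order all_algebra.
From mathcomp Require Import ring zify.
Import Order.TTheory GRing.Theory Num.Theory.
Local Open Scope ring_scope.

Section QHermite.
Variable R : realFieldType.
Variable q : R.

Lemma qint0 : qint q 0 = 0.
Proof. by rewrite /qint expr0 subrr mul0r. Qed.

Lemma qintD (a b : nat) : qint q (a + b) = qint q a + q ^+ a * qint q b.
Proof. by rewrite /qint exprD; ring. Qed.

Lemma qfactS (n : nat) : qfact q n.+1 = qfact q n * qint q n.+1.
Proof. by rewrite /qfact big_nat_recr. Qed.

Lemma qdfact2S (n : nat) : qdfact2 q n.+1 = qdfact2 q n * qint q (n.*2.+2).
Proof. by rewrite /qdfact2 big_nat_recr //= mul2n doubleS. Qed.

Lemma Hq_coef1 : Hq_coef q 1 = 0.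
Proof. by []. Qed.

Definition qHermite_sum (n : nat) (x : R) : R :=
  \sum_(i < n.+1) Hq_coef q i * eq_coef q x (n - i).

Lemma qHermiteE (n : nat) (x : R) : qHermite q n x = qfact q n * qHermite_sum n x.
Proof. by []. Qed.

Lemma eq_coefZ (x : R) (k : nat) : eq_coef q (q * x) k = q ^+ k * eq_coef q x k.
Proof. by rewrite /eq_coef exprMn mulrA. Qed.

Hypothesis qint_neq0 : forall k : nat, qint q k.+1 != 0.

Lemma qfact_neq0 (n : nat) : qfact q n != 0.
Proof.
elim: n => [|n IH]; first by rewrite /qfact big_geq ?oner_eq0.
by rewrite qfactS mulf_neq0.
Qed.

Lemma qdfact2_neq0 (n : nat) : qdfact2 q n != 0.
Proof.
elim: n => [|n IH]; first by rewrite /qdfact2 big_geq ?oner_eq0.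
by rewrite qdfact2S mulf_neq0.
Qed.

Lemma eq_coefS (x : R) (k : nat) :
  qint q k.+1 * eq_coef q x k.+1 = x * eq_coef q x k.
Proof.
rewrite /eq_coef qfactS exprS.
by field; rewrite qfact_neq0 qint_neq0.
Qed.

Lemma Hq_coefSS (i : nat) : qint q i.+2 * Hq_coef q i.+2 = - q ^+ i * Hq_coef q i.
Proof.
rewrite /Hq_coef !oddS negbK; case: ifP => [_|even_i]; first by rewrite !mulr0.
have [k ->] : exists k, i = k.*2 by exists i./2; rewrite -[LHS]odd_double_half even_i.
rewrite -doubleS !doubleK qdfact2S.
have -> : (k.+1 * k = k * k.-1 + k.*2)%N by case: k => [|k] //=; lia.
by rewrite exprS exprD; field; rewrite qdfact2_neq0 qint_neq0.
Qed.

Lemma qHermite_sum_term (n i : nat) (x : R) : (i <= n)%N ->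
  qint q n * (Hq_coef q i * eq_coef q (q * x) (n - i)) =
  q ^+ (n - i) * (qint q i * Hq_coef q i) * eq_coef q x (n - i)
  + q ^+ n * Hq_coef q i * (qint q (n - i) * eq_coef q x (n - i)).
Proof.
move=> le_in; have [k ->] : exists k, n = (i + k)%N by exists (n - i)%N; lia.
by rewrite addKn qintD eq_coefZ exprD; ring.
Qed.

Lemma qHermite_sum_rec (n : nat) (x : R) :
  qint q n.+2 * qHermite_sum n.+2 (q * x) =
  x * q ^+ n.+2 * qHermite_sum n.+1 x - q ^+ n * qHermite_sum n x.
Proof.
rewrite /qHermite_sum mulr_sumr.
under eq_bigr => i _ do rewrite (qHermite_sum_term n.+2 i x (ltn_ord i)).
rewrite big_split /= addrC; congr (_ + _).
- rewrite big_ord_recr /= subnn qint0 mul0r mulr0 addr0 mulr_sumr.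
  apply: eq_bigr => i _; have le_i : (i <= n.+1)%N := ltn_ord i.
  by rewrite subSn // eq_coefS; ring.
- rewrite big_ord_recl [X in _ + X]big_ord_recl /bump /= qint0 Hq_coef1.
  rewrite !(mul0r, mulr0, add0r).
  rewrite mulr_sumr -sumrN; apply: eq_bigr => i _.
  have le_i : (i <= n)%N := ltn_ord i.
  have -> : q ^+ n = q ^+ (n - i) * q ^+ i by rewrite -exprD subnK.
  by rewrite /bump /= !subSS Hq_coefSS; ring.
Qed.

End QHermite.

Lemma qint_gt0 (R : realFieldType) (q : R) (k : nat) :
  0 < q -> q < 1 -> 0 < qint q k.+1.
Proof.
by move=> q_gt0 q_lt1; rewrite divr_gt0 // subr_gt0 // exprn_ilt1 // ltW.
Qed.

Theorem theorem10 (R : realFieldType) (q : R) (hq0 : 0 < q) (hq1 : q < 1)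
  (n : nat) (hn : (2 <= n)%N) (x : R) :
  qHermite q n (q * x) =
    x * q ^+ n * qHermite q n.-1 x - qint q n.-1 * q ^+ (n - 2) * qHermite q (n - 2) x.
Proof.
have qint_neq0 (k : nat) : qint q k.+1 != 0 by rewrite gt_eqF ?qint_gt0.
case: n hn => [|[|n]] // _; rewrite /= !subSS subn0 !qHermiteE !qfactS.
by rewrite -mulrA (qHermite_sum_rec _ _ qint_neq0); ring.
Qed.
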